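(* Let $G=(X,\Sigma,\longrightarrow,X_0)$ and $R=(Z,\Sigma,\longrightarrow,Z_0)$ be automata. If $E_1$ and $E_2$ are $\Sigma_{ucr}$-controllability sets from $G$ to $R$ with $E_1\subseteq E_2$, then $\mathcal{A}(E_1)\|G\sqsubseteq\mathcal{A}(E_2)\|G$.
   Context: An automaton is a 4-tuple $A=(Q,\Sigma,\longrightarrow,Q_0)$ with state set $Q$, finite event set $\Sigma$, ${\longrightarrow}\subseteq Q\times\Sigma\times Q$ and $\emptyset\neq Q_0\subseteq Q$; write $q\xrightarrow{\sigma}q'$ for $(q,\sigma,q')\in{\longrightarrow}$. Events are partitioned into uncontrollable $\Sigma_{uc}$ and controllable $\Sigma_c$; $\Sigma_r\subseteq\Sigma$ is a fixed set of required events. For an automaton $S=(Y,\Sigma,\longrightarrow,Y_0)$, $S\|G=(Y\times X,\Sigma,\longrightarrow,Y_0\times X_0)$ with $(y,x)\xrightarrow{\sigma}(y',x')$ iff $y\xrightarrow{\sigma}y'$ and $x\xrightarrow{\sigma}x'$. For automata $A_1,A_2$ (state sets $Q_1,Q_2$, initial sets $Q_{01},Q_{02}$), $\Phi\subseteq Q_1\times Q_2$ is a simulation if every $q_0\in Q_{01}$ has $p_0\in Q_{02}$ with $(q_0,p_0)\in\Phi$, and for all $(q,p)\in\Phi$, $\sigma\in\Sigma$, $q\xrightarrow{\sigma}q'$ there is $p'$ with $p\xrightarrow{\sigma}p'$, $(q',p')\in\Phi$; $A_1\sqsubseteq A_2$ means one exists. For $W,W'\subseteq X\times Z$: $\mathit{match}_{G,R}(W,\sigma,W')$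 iff for all $(x,z)\in W$ and $x\xrightarrow{\sigma}x'$ there is $z'$ with $z\xrightarrow{\sigma}z'$ and $(x',z')\in W'$. $E\subseteq\wp(X\times Z)$ is a $\Sigma_{ucr}$-controllability set from $G$ to $R$ if: (istate) some $W_0\in E$ satisfies $\forall x_0\in X_0\,\exists z_0\in Z_0\,((x_0,z_0)\in W_0)$; (a) for every $W\in E$, $\sigma\in\Sigma_{uc}$ there is $W'\in E$ with $\mathit{match}_{G,R}(W,\sigma,W')$; (b) for every $W\in E$, $(x,z)\in W$, $\sigma\in\Sigma_r$, $z\xrightarrow{\sigma}z'$, there exist $x'$, $W'\in E$ with $x\xrightarrow{\sigma}x'$, $(x',z')\in W'$, $\mathit{match}_{G,R}(W,\sigma,W')$. For such $E$, $E^*=\bigcup_{\widetilde W\in E}\wp(\widetilde W)$, $\mathrm{Succ}_\sigma(W)=\bigcup_{(x,z)\in W}\{x':x\xrightarrow{\sigma}x'\}\times\{z':z\xrightarrow{\sigma}z'\}$, and $\mathcal{A}(E)=(E^*,\Sigma,\longrightarrow,I_E)$ with $I_E=\{W_0\in E^*:\forall x_0\in X_0\,\exists z_0\in Z_0\,((x_0,z_0)\in W_0)\text{ and }W_0\subseteq X_0\times Z_0\}$ and $W\xrightarrow{\sigma}W'$ iff (i) there exist $(x,z)\in W$, $(x',z')\in W'$ with $x\xrightarrow{\sigma}x'$, $z\xrightarrow{\sigma}z'$; (ii) $\mathit{match}_{G,R}(W,\sigma,W')$; (iii) $W'\subseteq\mathrm{Succ}_\sigma(W)$. *)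

From mathcomp Require Import all_boot.

Record automaton (Sigma : Type) := Automaton {
  st : Type;
  trans : st -> Sigma -> st -> Prop;
  init : st -> Prop;
  init_nonempty : exists q, init q }.

Arguments st {Sigma} a.
Arguments trans {Sigma} a _ _ _.
Arguments init {Sigma} a _.
Arguments init_nonempty {Sigma} a.

Definition sync {Sigma : Type} (S G : automaton Sigma) : automaton Sigma.
Proof.
refine (@Automaton Sigma (st S * st G)
  (fun p s p' => trans S p.1 s p'.1 /\ trans G p.2 s p'.2)
  (fun p => init S p.1 /\ init G p.2) _).
case: (init_nonempty S) => y Hy; case: (init_nonempty G) => x Hx.
by exists (y, x).
Defined.

Definition is_simulation {Sigma : Type} (A1 A2 : automaton Sigma)
  (Phi : st A1 -> st A2 -> Prop) : Prop :=
  (forall q0, init A1 q0 -> exists p0, init A2 p0 /\ Phi q0 p0) /\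
  (forall q p, Phi q p -> forall s q', trans A1 q s q' ->
     exists p', trans A2 p s p' /\ Phi q' p').

Definition simulated {Sigma : Type} (A1 A2 : automaton Sigma) : Prop :=
  exists Phi, is_simulation A1 A2 Phi.

(* Subsets W ⊆ X × Z are predicates; families E ⊆ ℘(X × Z) predicates on them. *)
Definition rel_of {Sigma : Type} (G R : automaton Sigma) := st G -> st R -> Prop.

Definition match_GR {Sigma : Type} {G R : automaton Sigma}
  (W : rel_of G R) (s : Sigma) (W' : rel_of G R) : Prop :=
  forall x z, W x z -> forall x', trans G x s x' ->
    exists z', trans R z s z' /\ W' x' z'.

(* Sigma_ucr-controllability set from G to R; uc = Σ_uc, r = Σ_r. *)
Definition ctrl_set {Sigma : finType} (uc r : pred Sigma) (G R : automaton Sigma)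
  (E : rel_of G R -> Prop) : Prop :=
  (exists W0, E W0 /\ forall x0, init G x0 -> exists z0, init R z0 /\ W0 x0 z0) /\
  (forall W, E W -> forall s, uc s -> exists W', E W' /\ match_GR W s W') /\
  (forall W, E W -> forall x z, W x z -> forall s, r s -> forall z',
     trans R z s z' ->
     exists x' W', trans G x s x' /\ E W' /\ W' x' z' /\ match_GR W s W').

Definition Estar {Sigma : Type} {G R : automaton Sigma} (E : rel_of G R -> Prop)
  (W : rel_of G R) : Prop :=
  exists Wt, E Wt /\ forall x z, W x z -> Wt x z.

Definition Succ {Sigma : Type} {G R : automaton Sigma} (s : Sigma)
  (W : rel_of G R) : rel_of G R :=
  fun x' z' => exists x z, W x z /\ trans G x s x' /\ trans R z s z'.

Definition AE_trans {Sigma : Type} {G R : automaton Sigma}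
  (W : rel_of G R) (s : Sigma) (W' : rel_of G R) : Prop :=
  (exists x z x' z', W x z /\ W' x' z' /\ trans G x s x' /\ trans R z s z') /\
  match_GR W s W' /\
  (forall x' z', W' x' z' -> Succ s W x' z').

Definition AE_init {Sigma : Type} {G R : automaton Sigma} (W : rel_of G R) : Prop :=
  (forall x0, init G x0 -> exists z0, init R z0 /\ W x0 z0) /\
  (forall x z, W x z -> init G x /\ init R z).

(* The automaton A(E); requires I_E nonempty, which holds for a
   controllability set (see AE_init_nonempty). *)
Lemma AE_init_nonempty {Sigma : finType} {uc r : pred Sigma} {G R : automaton Sigma}
  {E : rel_of G R -> Prop} (HE : ctrl_set uc r G R E) :
  exists W : {W : rel_of G R | Estar E W}, AE_init (proj1_sig W).
Proof.
case: HE => [[W0 [HW0 Hi]] _].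
pose W := fun x z => W0 x z /\ init G x /\ init R z.
have HW : Estar E W by exists W0; split => // x z [].
exists (exist _ W HW); split => /=.
- move=> x0 Hx0; case: (Hi x0 Hx0) => z0 [Hz0 Hw]; by exists z0.
- by move=> x z [_ []].
Qed.

Definition AE {Sigma : finType} {uc r : pred Sigma} {G R : automaton Sigma}
  {E : rel_of G R -> Prop} (HE : ctrl_set uc r G R E) : automaton Sigma :=
  @Automaton Sigma {W : rel_of G R | Estar E W}
    (fun W s W' => AE_trans (proj1_sig W) s (proj1_sig W'))
    (fun W => AE_init (proj1_sig W))
    (AE_init_nonempty HE).

(* Since E1 ⊆ E2 gives E1^* ⊆ E2^*, and the transitions and initial states of
   A(E) depend only on the underlying relation W and not on E, the inclusion
   E1^* → E2^* is a morphism of automata A(E1) → A(E2); its graph is a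
   simulation, and simulation is preserved by synchronising with G. *)
From mathcomp Require Import all_boot.

Section Simulation.

Context {Sigma : Type}.

Lemma simulated_morphism (A1 A2 : automaton Sigma) (f : st A1 -> st A2) :
  (forall q, init A1 q -> init A2 (f q)) ->
  (forall q s q', trans A1 q s q' -> trans A2 (f q) s (f q')) ->
  simulated A1 A2.
Proof.
move=> f_init f_trans; exists (fun q p => p = f q); split.
- by move=> q0 /f_init init_fq0; exists (f q0).
- by move=> q _ -> s q' /f_trans trans_fq; exists (f q').
Qed.

Lemma simulated_sync (S1 S2 G : automaton Sigma) :
  simulated S1 S2 -> simulated (sync S1 G) (sync S2 G).
Proof.
case=> Phi [Phi_init Phi_trans].
exists (fun q p => Phi q.1 p.1 /\ q.2 = p.2); split.
- move=> [y0 x0] [/= init_y0 init_x0].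
  have [p0 [init_p0 Phi_y0p0]] := Phi_init y0 init_y0.
  by exists (p0, x0).
- move=> [y x] [p _] [/= Phi_yp <-] s [y' x'] [/= trans_y trans_x].
  have [p' [trans_p Phi_y'p']] := Phi_trans y p Phi_yp s y' trans_y.
  by exists (p', x').
Qed.

End Simulation.

Lemma Estar_subset {Sigma : Type} {G R : automaton Sigma}
    {E1 E2 : rel_of G R -> Prop} {W : rel_of G R} :
  (forall W, E1 W -> E2 W) -> Estar E1 W -> Estar E2 W.
Proof. by move=> sub_E12 [Wt [/sub_E12 E2_Wt sub_WWt]]; exists Wt. Qed.

Lemma AE_simulated (Sigma : finType) (uc r : pred Sigma) (G R : automaton Sigma)
    (E1 E2 : rel_of G R -> Prop)
    (HE1 : ctrl_set uc r G R E1) (HE2 : ctrl_set uc r G R E2) :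
  (forall W, E1 W -> E2 W) -> simulated (AE HE1) (AE HE2).
Proof.
move=> sub_E12.
pose incl (W : st (AE HE1)) : st (AE HE2) :=
  exist _ (proj1_sig W) (Estar_subset sub_E12 (proj2_sig W)).
by apply: (@simulated_morphism _ (AE HE1) (AE HE2) incl).
Qed.

Theorem lemma7 (Sigma : finType) (uc r : pred Sigma) (G R : automaton Sigma)
  (E1 E2 : rel_of G R -> Prop)
  (HE1 : ctrl_set uc r G R E1) (HE2 : ctrl_set uc r G R E2)
  (Hsub : forall W, E1 W -> E2 W) :
  simulated (sync (AE HE1) G) (sync (AE HE2) G).
Proof. exact/simulated_sync/AE_simulated. Qed.
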